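(* For the monomial symmetric polynomials $m_\mu=m_\mu(L_1,L_2,L_3,L_4)$ in $\mathbb Z S_4$: (1) for $i\ge 7$, $m_i=14m_{i-2}-49m_{i-4}+36m_{i-6}$; (2) for $i\ge 6$, $m_{i,i}=8m_{i-1,i-1}-5m_{i-2,i-2}-50m_{i-3,i-3}+36m_{i-4,i-4}+72m_{i-5,i-5}$; (3) for $i\ge 5$, $m_{i,i,i}=40m_{i-2,i-2,i-2}-144m_{i-4,i-4,i-4}$.
   Context: $S_4$ is the symmetric group on $\{1,2,3,4\}$, $\mathbb Z S_4$ its integral group ring. The Jucys–Murphy elements are $L_1=0$ and $L_i=\sum_{k=1}^{i-1}(k\ i)$ for $i=2,3,4$; they pairwise commute. For a partition $\mu=(\mu_1,\dots,\mu_r)$, $m_\mu(x_1,\dots,x_4)$ is the monomial symmetric polynomial: the sum of all distinct monomials $x_1^{\alpha_1}\cdots x_4^{\alpha_4}$ with $(\alpha_1,\dots,\alpha_4)$ a rearrangement of $(\mu_1,\dots,\mu_r,0,\dots,0)$ ($m_\mu=0$ if $r>4$, and $m_\emptyset=1$). We write $m_\mu$ for $m_\mu(L_1,L_2,L_3,L_4)$ and omit parentheses in subscripts, e.g. $m_{i,i}=m_{(i,i)}$. *)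

From HB Require Import structures.
From mathcomp Require Import all_boot all_order all_algebra all_fingroup.
Set Implicit Arguments. Unset Strict Implicit. Unset Printing Implicit Defensive.
Import GRing.Theory.
Local Open Scope ring_scope.

(* The integral group ring Z S_4: functions 'S_4 -> int (coefficient vectors),
   with pointwise Z-module structure (inherited by {ffun _ -> int}) and
   convolution product.  Points 1,2,3,4 are the ordinals 0,1,2,3 of 'I_4. *)
Definition ZS4 := {ffun 'S_4 -> int}.

Definition gelt (g : 'S_4) : ZS4 := [ffun h => ((h == g) : nat)%:Z].

Definition gone : ZS4 := gelt 1%g.

(* (sum_h a_h h)(sum_k b_k k) = sum_g (sum_h a_h b_{h^-1 g}) g *)
Definition gmul (a b : ZS4) : ZS4 :=
  [ffun g => \sum_(h : 'S_4) a h * b (h^-1 * g)%g].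

Definition gpow (a : ZS4) (n : nat) : ZS4 := iter n (gmul a) gone.

(* Jucys-Murphy elements: L i = sum_{k < i} (k i); L 0 = 0. *)
Definition JM (i : 'I_4) : ZS4 :=
  \sum_(k < 4 | (k < i)%N) gelt (tperm k i).

(* mu padded with zeros to length 4 (mu assumed of length <= 4) *)
Definition pad4 (mu : seq nat) : seq nat := take 4 (mu ++ nseq 4 0%N).

Definition exps (mu : seq nat) : seq (seq nat) :=
  undup [seq [seq nth 0%N (pad4 mu) (s i) | i <- enum 'I_4] | s : 'S_4].

Definition monJM (alpha : seq nat) : ZS4 :=
  foldr gmul gone [seq gpow (JM i) (nth 0%N alpha i) | i <- enum 'I_4].

Definition msym (mu : seq nat) : ZS4 :=
  if (size mu <= 4)%N then \sum_(alpha <- exps mu) monJM alpha else 0.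

From HB Require Import structures.
From mathcomp Require Import all_boot all_order all_algebra all_fingroup zify.
Set Implicit Arguments. Unset Strict Implicit. Unset Printing Implicit Defensive.
Import GRing.Theory.
Local Open Scope ring_scope.

(* Since L_1 = 0 and the L's commute, for j > 0 the three polynomials are
   sums of j-th powers:
     m_j = L_2^j + L_3^j + L_4^j,   m_{j,j} = (L_2 L_3)^j + (L_2 L_4)^j + (L_3 L_4)^j,
     m_{j,j,j} = (L_2 L_3 L_4)^j.
   Each base element x satisfies a relation x^{d+1} = c_0 x^d + ... + c_{d-1} x,
   which makes j |-> x^j satisfy the linear recurrence with coefficients c for
   j > d; such recurrences are preserved by sums.  Points 1..4 of the
   text are the ordinals 0..3, so L_1 .. L_4 are written L 0 .. L 3 below. *)

Lemma gmulA : associative gmul.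
Proof.
move=> a b c; apply/esym/ffunP => g; rewrite !ffunE.
under eq_bigr => h _ do rewrite ffunE mulr_suml.
rewrite exchange_big /=; apply: eq_bigr => k _.
rewrite ffunE mulr_sumr (reindex_inj (mulgI k)) /=; apply: eq_bigr => h _.
by rewrite mulKg invMg mulgA mulrA.
Qed.

Lemma gmul1l : left_id gone gmul.
Proof.
move=> a; apply/ffunP => g; rewrite ffunE (bigD1 1%g) //= big1 ?addr0.
  by rewrite ffunE eqxx invg1 mul1g mul1r.
by move=> h /negbTE h_neq1; rewrite ffunE h_neq1 mul0r.
Qed.

Lemma gmul1r : right_id gone gmul.
Proof.
move=> a; apply/ffunP => g; rewrite ffunE (bigD1 g) //= big1 ?addr0.
  by rewrite ffunE mulVg eqxx mulr1.
by move=> h /negbTE h_neqg; rewrite ffunE -eq_mulVg1 h_neqg mulr0.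
Qed.

Lemma gmulDl : left_distributive gmul +%R.
Proof.
move=> a b c; apply/ffunP => g; rewrite !ffunE -big_split /=.
by apply: eq_bigr => h _; rewrite ffunE mulrDl.
Qed.

Lemma gmulDr : right_distributive gmul +%R.
Proof.
move=> a b c; apply/ffunP => g; rewrite !ffunE -big_split /=.
by apply: eq_bigr => h _; rewrite ffunE mulrDr.
Qed.

(* ZS4 itself carries the pointwise product of finite functions, so the
   convolution ring structure is put on an alias. *)
Definition gring : Type := ZS4.
HB.instance Definition _ := GRing.Zmodule.on gring.
HB.instance Definition _ :=
  GRing.Zmodule_isPzRing.Build gring gmulA gmul1l gmul1r gmulDl gmulDr.

Lemma gpowE (a : gring) n : gpow a n = a ^+ n.
Proof. by elim: n => [|n IH]; rewrite ?expr0 // exprS -IH. Qed.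

Section LinearRecurrence.
Variable V : zmodType.

Definition linrec (cs : seq int) (u : nat -> V) : Prop :=
  forall i, (size cs < i)%N -> u i = \sum_(0 <= k < size cs) u (i - k.+1)%N *~ cs`_k.

Lemma linrec_add cs u w :
  linrec cs u -> linrec cs w -> linrec cs (fun i => u i + w i).
Proof.
move=> ru rw i lt_i; rewrite ru // rw // -big_split /=.
by apply: eq_bigr => k _; rewrite mulrzDl.
Qed.

(* The recurrence only looks at positive indices. *)
Lemma linrec_eq cs u w :
  (forall i, (0 < i)%N -> u i = w i) -> linrec cs w -> linrec cs u.
Proof.
move=> uw rw i lt_i; rewrite uw ?(leq_ltn_trans _ lt_i) // rw //.
apply: eq_big_nat => k /andP[_ lt_k].
by rewrite uw // subn_gt0 (leq_ltn_trans lt_k lt_i).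
Qed.

End LinearRecurrence.

Definition pow_relation (R : pzRingType) (cs : seq int) (x : R) : Prop :=
  x ^+ (size cs).+1 = \sum_(0 <= k < size cs) x ^+ (size cs - k) *~ cs`_k.

Lemma linrec_pow (R : pzRingType) (cs : seq int) (x : R) :
  pow_relation cs x -> linrec cs (fun i => x ^+ i).
Proof.
move=> xE i lt_i; rewrite -{1}(subnK lt_i) exprD xE mulr_sumr.
apply: eq_big_nat => k /andP[_ lt_k]; rewrite mulrzAr -exprD.
by congr (x ^+ _ *~ _); lia.
Qed.

Definition oneline (s : 'S_4) : seq nat := [seq val (s i) | i <- enum 'I_4].

Definition perms4 : seq (seq nat) := permutations (iota 0 4).

Lemma nth_oneline (s : 'S_4) (i : 'I_4) : nth 0%N (oneline s) i = s i.
Proof. by rewrite (nth_map i) ?size_enum_ord // nth_ord_enum. Qed.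

Lemma oneline_inj : injective oneline.
Proof.
by move=> s t st_eq; apply/permP => i; apply: val_inj; rewrite /= -!nth_oneline st_eq.
Qed.

Lemma oneline_perms4 (s : 'S_4) : oneline s \in perms4.
Proof.
rewrite mem_permutations /oneline (map_comp val s) -val_enum_ord perm_map //.
apply: uniq_perm; rewrite ?(map_inj_uniq (@perm_inj _ s)) ?enum_uniq // => i.
by rewrite mem_enum; apply/mapP; exists (s^-1 i)%g; rewrite ?mem_enum ?permKV.
Qed.

Lemma index_enumE (T : finType) : index_enum T = enum T.
Proof. by rewrite [index_enum _]unlock enumT. Qed.

Lemma perms4_oneline : perm_eq (map oneline (enum 'S_4)) perms4.
Proof.
have uniq_oneline : uniq (map oneline (enum 'S_4)).
  by rewrite map_inj_uniq ?enum_uniq //; exact: oneline_inj.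
have sub_perms4 : {subset map oneline (enum 'S_4) <= perms4}.
  by move=> c /mapP [s _ ->]; exact: oneline_perms4.
have size_perms4 : size perms4 = size (map oneline (enum 'S_4)).
  by rewrite size_map size_permutations ?iota_uniq // size_iota -card_Sn cardT.
have [_ eq_size] := uniq_min_size uniq_oneline sub_perms4 (eq_leq size_perms4).
by apply: uniq_perm; rewrite ?permutations_uniq.
Qed.

Lemma sum_oneline (V : nmodType) (F : seq nat -> V) :
  \sum_(s : 'S_4) F (oneline s) = \sum_(c <- perms4) F c.
Proof. by rewrite -(perm_big _ perms4_oneline) big_map index_enumE. Qed.

Definition cmul (c d : seq nat) : seq nat := map (nth 0%N d) c.
Definition cinv (c : seq nat) : seq nat := [seq index k c | k <- iota 0 4].
Definition ctransp (a b : nat) : seq nat :=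
  [seq if k == a then b else if k == b then a else k | k <- iota 0 4].

Lemma oneline1 : oneline 1%g = iota 0 4.
Proof. by rewrite -val_enum_ord; apply: eq_map => i; rewrite perm1. Qed.

Lemma onelineM (s t : 'S_4) : oneline (s * t)%g = cmul (oneline s) (oneline t).
Proof. by rewrite /cmul -map_comp; apply: eq_map => i /=; rewrite nth_oneline permM. Qed.

Lemma onelineV (s : 'S_4) : oneline s^-1%g = cinv (oneline s).
Proof.
rewrite /cinv -val_enum_ord -map_comp; apply: eq_map => j /=.
have inj_s : injective (fun i => val (s i)) by move=> x y /val_inj/perm_inj.
by rewrite -{2}(permKV s j) (index_map inj_s) index_enum_ord.
Qed.

Lemma oneline_tperm (x y : 'I_4) : oneline (tperm x y) = ctransp x y.
Proof.
rewrite /ctransp -val_enum_ord -map_comp; apply: eq_map => k.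
by rewrite /= permE /= !(fun_if val).
Qed.

(* An element of Z S_4 is modelled by the list of its coefficients, in the
   order of perms4; all operations below are computable by vm_compute. *)
Definition vec (f : seq nat -> int) : seq int := map f perms4.
Definition coord (v : seq int) (c : seq nat) : int := nth 0 v (index c perms4).

Definition vzero : seq int := vec (fun=> 0).
Definition vadd (v w : seq int) : seq int := vec (fun c => coord v c + coord w c).
Definition vscale (z : int) (v : seq int) : seq int := vec (fun c => coord v c * z).
Definition vsum (vs : seq (seq int)) : seq int := foldr vadd vzero vs.
Definition vunit (d : seq nat) : seq int := vec (fun c => (c == d)%:Z).
Definition vone : seq int := vunit (iota 0 4).
Definition vmul (v w : seq int) : seq int :=
  vec (fun c => foldr +%R 0 [seq coord v h * coord w (cmul (cinv h) c) | h <- perms4]).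
Definition vpow (v : seq int) (n : nat) : seq int := iter n (vmul v) vone.

Lemma coord_vec f c : c \in perms4 -> coord (vec f) c = f c.
Proof. by move=> c_in; rewrite /coord (nth_map [::]) ?index_mem ?nth_index. Qed.

Definition rep (a : ZS4) (v : seq int) : Prop := forall s, a s = coord v (oneline s).

Lemma rep_vec (a : ZS4) f : (forall s, a s = f (oneline s)) -> rep a (vec f).
Proof. by move=> aE s; rewrite coord_vec ?oneline_perms4. Qed.

Lemma rep_eq a b v : rep a v -> rep b v -> a = b.
Proof. by move=> ra rb; apply/ffunP => s; rewrite ra rb. Qed.

Lemma rep_zero : rep 0 vzero.
Proof. by apply: rep_vec => s; rewrite ffunE. Qed.

Lemma rep_add a b v w : rep a v -> rep b w -> rep (a + b) (vadd v w).
Proof. by move=> ra rb; apply: rep_vec => s; rewrite ffunE ra rb. Qed.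

Lemma rep_scale a v z : rep a v -> rep (a *~ z) (vscale z v).
Proof. by move=> ra; apply: rep_vec => s; rewrite ffunMzE ra mulrzz. Qed.

Lemma rep_sum (I : Type) (r : seq I) (F : I -> ZS4) (w : I -> seq int) :
  (forall i, rep (F i) (w i)) -> rep (\sum_(i <- r) F i) (vsum (map w r)).
Proof.
move=> rF; elim: r => [|i r IH]; first by rewrite big_nil; apply: rep_zero.
by rewrite big_cons; apply: rep_add.
Qed.

Lemma rep_unit g : rep (gelt g) (vunit (oneline g)).
Proof. by apply: rep_vec => s; rewrite ffunE (inj_eq oneline_inj). Qed.

Lemma rep_one : rep (1 : gring) vone.
Proof. by rewrite /vone -oneline1; apply: rep_unit. Qed.

Lemma rep_mul (a b : gring) v w : rep a v -> rep b w -> rep (a * b) (vmul v w).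
Proof.
move=> ra rb; apply: rep_vec => g; rewrite -[a * b]/(gmul a b) ffunE foldrE big_map.
rewrite -(sum_oneline (fun c => coord v c * coord w (cmul (cinv c) (oneline g)))).
by apply: eq_bigr => h _; rewrite -onelineV -onelineM ra rb.
Qed.

Lemma rep_pow (a : gring) v n : rep a v -> rep (a ^+ n) (vpow v n).
Proof.
move=> ra; elim: n => [|n IH]; first by rewrite expr0; apply: rep_one.
by rewrite exprS; apply: rep_mul.
Qed.

Lemma comm_by_rep (x y : gring) v w :
  rep x v -> rep y w -> vmul v w == vmul w v -> GRing.comm x y.
Proof.
by move=> rx ry /eqP vE; apply: rep_eq (rep_mul rx ry) _; rewrite vE; apply: rep_mul.
Qed.

Lemma pow_relation_by_rep (x : gring) v (cs : seq int) : rep x v ->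
  vpow v (size cs).+1 ==
    vsum [seq vscale cs`_k (vpow v (size cs - k)) | k <- index_iota 0 (size cs)] ->
  pow_relation cs x.
Proof.
move=> rx /eqP vE; apply: rep_eq (rep_pow _ rx) _; rewrite vE.
by apply: rep_sum => k; apply/rep_scale/rep_pow.
Qed.

Definition L (k : nat) : gring := JM (inord k).

Lemma L0 : L 0 = 0.
Proof. by apply: big_pred0 => k; rewrite inordK. Qed.

Definition vJM (n : nat) : seq int :=
  vsum [seq if (k < n)%N then vunit (ctransp k n) else vzero | k <- iota 0 4].

Lemma rep_JM (i : 'I_4) : rep (JM i) (vJM i).
Proof.
rewrite /JM big_mkcond /vJM -val_enum_ord -map_comp -index_enumE.
apply: rep_sum => k /=.
by case: ifP => _; [rewrite -oneline_tperm; apply: rep_unit | apply: rep_zero].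
Qed.

Lemma rep_L k : (k < 4)%N -> rep (L k) (vJM k).
Proof. by move=> lt_k4; rewrite -{2}(@inordK 3 k lt_k4); apply: rep_JM. Qed.

Lemma comm_L12 : GRing.comm (L 1) (L 2).
Proof. by apply: (comm_by_rep (rep_L _) (rep_L _)); vm_compute. Qed.

Lemma comm_L13 : GRing.comm (L 1) (L 3).
Proof. by apply: (comm_by_rep (rep_L _) (rep_L _)); vm_compute. Qed.

Lemma comm_L23 : GRing.comm (L 2) (L 3).
Proof. by apply: (comm_by_rep (rep_L _) (rep_L _)); vm_compute. Qed.

(* Coefficients of the three recurrences, most recent term first. *)
Definition cs1 : seq int := [:: 0; 14; 0; -49; 0; 36].
Definition cs2 : seq int := [:: 8; -5; -50; 36; 72].
Definition cs3 : seq int := [:: 0; 40; 0; -144].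

(* (L k)^7 = 14 (L k)^5 - 49 (L k)^3 + 36 L k, i.e. L k is a root of
   X (X^2 - 1) (X^2 - 4) (X^2 - 9). *)
Lemma pow_relation_L k : (k < 4)%N -> pow_relation cs1 (L k).
Proof.
case: k => [|[|[|[|//]]]] _;
  by apply: pow_relation_by_rep (rep_L _) _; vm_compute.
Qed.

Lemma pow_relation_LL k l : (0 < k < l)%N -> (l < 4)%N -> pow_relation cs2 (L k * L l).
Proof.
case: k => [//|[|[|[|//]]]]; case: l => [|[|[|[|[|//]]]]] //= _ _;
  by apply: pow_relation_by_rep (rep_mul (rep_L _) (rep_L _)) _; vm_compute.
Qed.

Lemma pow_relation_LLL : pow_relation cs3 (L 1 * L 2 * L 3).
Proof.
by apply: pow_relation_by_rep (rep_mul (rep_mul (rep_L _) (rep_L _)) (rep_L _)) _;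
  vm_compute.
Qed.

Lemma enum_ord4 : enum 'I_4 = [seq inord k | k <- iota 0 4].
Proof. by rewrite -val_enum_ord -map_comp map_id_in // => i _; rewrite /= inord_val. Qed.

Lemma monJM4 a0 a1 a2 a3 :
  monJM [:: a0; a1; a2; a3] = L 0 ^+ a0 * (L 1 ^+ a1 * (L 2 ^+ a2 * (L 3 ^+ a3 * 1))).
Proof. by rewrite /monJM enum_ord4 /= !gpowE !inordK. Qed.

Lemma monJM_vanish a0 a1 a2 a3 : (0 < a0)%N -> monJM [:: a0; a1; a2; a3] = 0.
Proof. by case: a0 => // a0 _; rewrite monJM4 L0 expr0n mul0r. Qed.

Lemma monJM0 a1 a2 a3 : monJM [:: 0%N; a1; a2; a3] = L 1 ^+ a1 * L 2 ^+ a2 * L 3 ^+ a3.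
Proof. by rewrite monJM4 expr0 mul1r mulr1 !mulrA. Qed.

Lemma size_pad4 mu : size (pad4 mu) = 4%N.
Proof. by rewrite size_takel // size_cat size_nseq leq_addl. Qed.

Lemma pad4_scale j mu : pad4 (map (muln j) mu) = map (muln j) (pad4 mu).
Proof. by rewrite /pad4 map_take map_cat map_nseq muln0. Qed.

Definition patterns (mu : seq nat) : seq (seq nat) :=
  undup [seq map (nth 0%N (pad4 mu)) c | c <- perms4].

Lemma exps_patterns mu : perm_eq (exps mu) (patterns mu).
Proof.
apply: perm_undup => alpha; apply: perm_mem.
apply: perm_trans (perm_map _ perms4_oneline).
rewrite -map_comp; apply/seq.permP => p; congr (count _ _); apply: eq_map => s.
by rewrite /= /oneline -map_comp.
Qed.

Lemma msym_scale mu j (ps : seq (seq nat)) : (0 < j)%N -> (size mu <= 4)%N ->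
  perm_eq ps (patterns mu) ->
  msym (map (muln j) mu) = \sum_(alpha <- ps) monJM (map (muln j) alpha).
Proof.
move=> j_gt0 size_mu ps_mu; rewrite /msym size_map size_mu.
have inj_scale : injective (map (muln j)).
  by apply: inj_map => a b /eqP; rewrite eqn_pmul2l // => /eqP.
have exps_scale : exps (map (muln j) mu) = map (map (muln j)) (exps mu).
  rewrite /exps pad4_scale -undup_map_inj // -map_comp; congr undup.
  apply: eq_map => s; rewrite /= -map_comp; apply: eq_map => i /=.
  by rewrite (nth_map 0%N) ?size_pad4.
rewrite exps_scale big_map; apply: perm_big.
by apply: perm_trans (exps_patterns mu) _; rewrite perm_sym.
Qed.

(* m_j, m_{j,j} and m_{j,j,j} as sums of powers, for j > 0.  That the listed
   0/1 vectors are the rearrangements of the pattern is closed by evaluation. *)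
Lemma msym1 j : (0 < j)%N -> msym [:: j] = L 1 ^+ j + L 2 ^+ j + L 3 ^+ j.
Proof.
move=> j_gt0; have -> : [:: j] = map (muln j) [:: 1%N] by rewrite /= muln1.
rewrite (@msym_scale _ _ [:: [:: 1; 0; 0; 0]; [:: 0; 1; 0; 0];
                            [:: 0; 0; 1; 0]; [:: 0; 0; 0; 1]]%N) //.
rewrite !big_cons big_nil /= !muln0 !muln1 !monJM0 monJM_vanish //.
by rewrite !expr0 !mulr1 !mul1r add0r addr0 !addrA.
Qed.

Lemma msym2 j : (0 < j)%N ->
  msym [:: j; j] = (L 1 * L 2) ^+ j + (L 1 * L 3) ^+ j + (L 2 * L 3) ^+ j.
Proof.
move=> j_gt0; have -> : [:: j; j] = map (muln j) [:: 1; 1]%N by rewrite /= muln1.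
rewrite (@msym_scale _ _ [:: [:: 1; 1; 0; 0]; [:: 1; 0; 1; 0]; [:: 1; 0; 0; 1];
                            [:: 0; 1; 1; 0]; [:: 0; 1; 0; 1]; [:: 0; 0; 1; 1]]%N) //.
rewrite !big_cons big_nil /= !muln0 !muln1 !monJM0 !monJM_vanish //.
rewrite (exprMn_comm _ comm_L12) (exprMn_comm _ comm_L13) (exprMn_comm _ comm_L23).
by rewrite !expr0 !mulr1 !mul1r !add0r addr0 !addrA.
Qed.

Lemma msym3 j : (0 < j)%N -> msym [:: j; j; j] = (L 1 * L 2 * L 3) ^+ j.
Proof.
move=> j_gt0; have -> : [:: j; j; j] = map (muln j) [:: 1; 1; 1]%N by rewrite /= muln1.
rewrite (@msym_scale _ _ [:: [:: 1; 1; 1; 0]; [:: 1; 1; 0; 1];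
                            [:: 1; 0; 1; 1]; [:: 0; 1; 1; 1]]%N) //.
rewrite !big_cons big_nil /= !muln0 !muln1 monJM0 !monJM_vanish //.
have comm_L12_3 : GRing.comm (L 1 * L 2) (L 3).
  by apply/commr_sym/commrM; apply/commr_sym; [apply: comm_L13 | apply: comm_L23].
by rewrite (exprMn_comm _ comm_L12_3) (exprMn_comm _ comm_L12) !add0r addr0.
Qed.

Lemma linrec_m1 : linrec (V := gring) cs1 (fun i => msym [:: i]).
Proof.
apply: linrec_eq msym1 _.
by do 2?apply: linrec_add; exact: linrec_pow (pow_relation_L _).
Qed.

Lemma linrec_m2 : linrec (V := gring) cs2 (fun i => msym [:: i; i]).
Proof.
apply: linrec_eq msym2 _.
by do 2?apply: linrec_add; exact: linrec_pow (pow_relation_LL _ _).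
Qed.

Lemma linrec_m3 : linrec (V := gring) cs3 (fun i => msym [:: i; i; i]).
Proof. exact: linrec_eq msym3 (linrec_pow pow_relation_LLL). Qed.

Lemma linrec_cs1 (V : zmodType) (u : nat -> V) : linrec cs1 u ->
  forall i, (7 <= i)%N -> u i = u (i - 2)%N *~ 14 - u (i - 4)%N *~ 49 + u (i - 6)%N *~ 36.
Proof.
move=> ru i le_7i; rewrite ru // big_mkord !big_ord_recl big_ord0 /=.
by rewrite !mulr0z !add0r addr0 mulrNz addrA.
Qed.

Lemma linrec_cs2 (V : zmodType) (u : nat -> V) : linrec cs2 u ->
  forall i, (6 <= i)%N -> u i = u (i - 1)%N *~ 8 - u (i - 2)%N *~ 5
    - u (i - 3)%N *~ 50 + u (i - 4)%N *~ 36 + u (i - 5)%N *~ 72.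
Proof.
move=> ru i le_6i; rewrite ru // big_mkord !big_ord_recl big_ord0 /=.
by rewrite addr0 !mulrNz !addrA.
Qed.

Lemma linrec_cs3 (V : zmodType) (u : nat -> V) : linrec cs3 u ->
  forall i, (5 <= i)%N -> u i = u (i - 2)%N *~ 40 - u (i - 4)%N *~ 144.
Proof.
move=> ru i le_5i; rewrite ru // big_mkord !big_ord_recl big_ord0 /=.
by rewrite !mulr0z !add0r addr0 mulrNz.
Qed.

Theorem lemma2p2 :
  (forall i : nat, (7 <= i)%N ->
     msym [:: i] =
       msym [:: i - 2]%N *~ 14 - msym [:: i - 4]%N *~ 49
       + msym [:: i - 6]%N *~ 36) /\
  (forall i : nat, (6 <= i)%N ->
     msym [:: i; i] =
       msym [:: i - 1; i - 1]%N *~ 8 - msym [:: i - 2; i - 2]%N *~ 5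
       - msym [:: i - 3; i - 3]%N *~ 50 + msym [:: i - 4; i - 4]%N *~ 36
       + msym [:: i - 5; i - 5]%N *~ 72) /\
  (forall i : nat, (5 <= i)%N ->
     msym [:: i; i; i] =
       msym [:: i - 2; i - 2; i - 2]%N *~ 40
       - msym [:: i - 4; i - 4; i - 4]%N *~ 144).
Proof.
split; first exact: linrec_cs1 linrec_m1.
split; first exact: linrec_cs2 linrec_m2.
exact: linrec_cs3 linrec_m3.
Qed.
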